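(* Let $A\in\mathbb{C}^{p\times p}$ and $C\in\mathbb{C}^{q\times q}$ be Hermitian positive semidefinite, let $B\in\mathbb{C}^{p\times q}$, and let $H=\begin{bmatrix} A & B\\ B^* & -C\end{bmatrix}$. Then $H$ is nonsingular if and only if the matrices $A+\sqrt{BB^*}$ and $C+\sqrt{B^*B}$ are both positive definite.
   Context: $\sqrt{X}$ denotes the positive semidefinite square root of a positive semidefinite matrix $X$. *)

(* Complex numbers are modelled as R[i] = complex R for an
   arbitrary real number field R : realType (mathcomp-analysis), using the
   complex numbers of mathcomp-real-closed. *)
From HB Require Import structures.
From mathcomp Require Import all_boot all_order all_algebra.
From mathcomp Require Import reals.
From mathcomp.real_closed Require Import complex.
From Stdlib Require Import ClassicalEpsilon.

Set Implicit Arguments.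
Unset Strict Implicit.
Unset Printing Implicit Defensive.

Import Order.TTheory GRing.Theory Num.Theory.
Local Open Scope ring_scope.

Definition adjmx {C : numClosedFieldType} m n (M : 'M[C]_(m, n)) : 'M[C]_(n, m) :=
  map_mx Num.conj (M^T).

Definition hermitian {C : numClosedFieldType} n (M : 'M[C]_n) : Prop :=
  adjmx M = M.

Definition psdmx {C : numClosedFieldType} n (M : 'M[C]_n) : Prop :=
  hermitian M /\ forall x : 'cV[C]_n, 0 <= (adjmx x *m M *m x) 0 0.

Definition pdmx {C : numClosedFieldType} n (M : 'M[C]_n) : Prop :=
  hermitian M /\ forall x : 'cV[C]_n, x != 0 -> 0 < (adjmx x *m M *m x) 0 0.

(* It is chosen by Hilbert's epsilon
   operator; for a PSD argument this is exactly the PSD square root. *)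
Definition msqrt {C : numClosedFieldType} n (M : 'M[C]_n) : 'M[C]_n :=
  epsilon (inhabits 0) (fun X : 'M[C]_n => psdmx X /\ X *m X = M).

From Pilot Require Import Defs.
From HB Require Import structures.
From mathcomp Require Import all_boot all_order all_algebra.
From mathcomp Require Import reals spectral.
From mathcomp.real_closed Require Import complex.
From Stdlib Require Import ClassicalEpsilon.

(* Write M' for the conjugate transpose.  Both conditions are kernel
   conditions: [sqrt (B B')] has the same kernel as [B'], so [A + sqrt (B B')]
   is positive definite iff [ker A] and [ker B'] meet trivially, and
   symmetrically for [C + sqrt (B' B)].  On the other hand, if [H (x, y) = 0]
   then [x' A x = - x' B y] while [y' C y = y' B' x] is the conjugate of
   [x' B y], so [y' C y = - x' A x]; both forms being nonnegative they vanish,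
   whence [A x = C y = 0] and then [B y = B' x = 0].  Hence [ker H] is the
   product of [ker A ∩ ker B'] and [ker C ∩ ker B]. *)

Set Implicit Arguments.
Unset Strict Implicit.
Unset Printing Implicit Defensive.

Import Order.TTheory GRing.Theory Num.Theory.
Local Open Scope ring_scope.

Lemma unitmx_kerP (F : fieldType) n (H : 'M[F]_n) :
  H \in unitmx <-> (forall v : 'cV[F]_n, H *m v = 0 -> v = 0).
Proof.
split=> [H_unit v Hv0|ker0]; first by rewrite -(mulKmx H_unit v) Hv0 mulmx0.
rewrite -unitmx_tr unitmxE unitfE; apply/det0P => -[w w_neq0 wH0].
move: w_neq0; rewrite -trmx_eq0 (ker0 w^T) ?eqxx //.
by rewrite -[H]trmxK -trmx_mul wH0 trmx0.
Qed.

Section PsdMatrices.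
Variable K : numClosedFieldType.

Local Notation qform M x := ((adjmx x *m M *m x) 0 0).

Lemma adjmxK m n (M : 'M[K]_(m, n)) : adjmx (adjmx M) = M.
Proof. exact: trmxCK. Qed.

Lemma adjmxM m n k (A : 'M[K]_(m, n)) (B : 'M[K]_(n, k)) :
  adjmx (A *m B) = adjmx B *m adjmx A.
Proof. by rewrite /adjmx trmx_mul map_mxM. Qed.

Lemma adjmxD m n (A B : 'M[K]_(m, n)) : adjmx (A + B) = adjmx A + adjmx B.
Proof. by apply/matrixP => i j; rewrite !mxE rmorphD. Qed.

Lemma adjmxN m n (A : 'M[K]_(m, n)) : adjmx (- A) = - adjmx A.
Proof. by apply/matrixP => i j; rewrite !mxE rmorphN. Qed.

Lemma adjmx_diag n (d : 'rV[K]_n) :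
  adjmx (diag_mx d) = diag_mx (map_mx Num.conj d).
Proof. by rewrite /adjmx tr_diag_mx map_diag_mx. Qed.

Lemma adjmx_delta m n (i : 'I_m) (j : 'I_n) :
  adjmx (delta_mx i j : 'M[K]_(m, n)) = delta_mx j i.
Proof. by apply/matrixP => a b; rewrite !mxE rmorph_nat andbC. Qed.

Lemma qform_diag n (d : 'rV[K]_n) (y : 'cV[K]_n) :
  qform (diag_mx d) y = \sum_j d 0 j * `|y j 0| ^+ 2.
Proof.
rewrite mul_mx_diag !mxE; apply: eq_bigr => j _.
by rewrite !mxE normCK [_ * d 0 j]mulrC -mulrA [_ * (y j 0)^*]mulrC.
Qed.

Lemma adjmx_mulmxE n (y : 'cV[K]_n) : (adjmx y *m y) 0 0 = \sum_j `|y j 0| ^+ 2.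
Proof. by rewrite mxE; apply: eq_bigr => j _; rewrite !mxE normCK mulrC. Qed.

Lemma adjmx_mulmx_eq0 n (y : 'cV[K]_n) : (adjmx y *m y) 0 0 = 0 -> y = 0.
Proof.
rewrite adjmx_mulmxE => y2_eq0; apply/matrixP => j k; rewrite ord1 mxE.
have y2_ge0 i : 0 <= `|y i 0| ^+ 2 by rewrite exprn_ge0.
have /eqP := @psumr_eq0P _ _ _ _ (fun i _ => y2_ge0 i) y2_eq0 j isT.
by rewrite sqrf_eq0 normr_eq0 => /eqP.
Qed.

Lemma mulmx_adj_eq0 m n (M : 'M[K]_(m, n)) (x : 'cV[K]_m) :
  (M *m adjmx M *m x == 0) = (adjmx M *m x == 0).
Proof.
apply/eqP/eqP => [MMx0|Mx0]; last by rewrite -mulmxA Mx0 mulmx0.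
apply: adjmx_mulmx_eq0.
by rewrite adjmxM adjmxK -mulmxA (mulmxA M) MMx0 mulmx0 mxE.
Qed.

Lemma psdmx_mulmx_adj m n (B : 'M[K]_(m, n)) : psdmx (B *m adjmx B).
Proof.
split=> [|x]; first by rewrite /Defs.hermitian adjmxM adjmxK.
have -> : adjmx x *m (B *m adjmx B) *m x
          = adjmx (adjmx B *m x) *m (adjmx B *m x).
  by rewrite adjmxM adjmxK !mulmxA.
by rewrite adjmx_mulmxE; apply: sumr_ge0 => j _; rewrite exprn_ge0.
Qed.

Lemma psdmx_conj_diag n (P : 'M[K]_n) (d : 'rV[K]_n) :
  (forall j, 0 <= d 0 j) -> psdmx (adjmx P *m diag_mx d *m P).
Proof.
move=> d_ge0; split=> [|x].
  rewrite /Defs.hermitian !adjmxM adjmxK adjmx_diag mulmxA.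
  congr (_ *m diag_mx _ *m _).
  by apply/matrixP => i j; rewrite mxE ord1 geC0_conj.
rewrite !mulmxA -adjmxM -!mulmxA mulmxA qform_diag.
by apply: sumr_ge0 => j _; rewrite mulr_ge0 ?exprn_ge0.
Qed.

Lemma psdmx_spectral n (M : 'M[K]_n) : psdmx M ->
  exists (P : 'M[K]_n) (d : 'rV[K]_n),
    [/\ P \is unitarymx, forall j, 0 <= d 0 j & M = adjmx P *m diag_mx d *m P].
Proof.
move=> [M_herm M_ge0].
have PU := spectral_unitarymx M.
have /orthomx_spectralP : M \is normalmx.
  by apply/normalmxP; change (M *m adjmx M = adjmx M *m M); rewrite M_herm.
rewrite invmx_unitary // => M_eq.
set P := spectralmx M in PU M_eq *; set d := spectral_diag M in M_eq *.
change (M = adjmx P *m diag_mx d *m P) in M_eq.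
exists P, d; split=> // j.
have := M_ge0 (adjmx ('e_j *m P)).
rewrite (adjmxK ('e_j *m P)) M_eq adjmxM !mulmxA !mulmxtVK // adjmx_delta.
by rewrite -rowE row_diag_mx -scalemxAl mul_delta_mx !mxE eqxx mulr1.
Qed.

Lemma psdmx_sqrt n (M : 'M[K]_n) : psdmx M -> exists S, psdmx S /\ S *m S = M.
Proof.
move=> /psdmx_spectral [P [d [PU d_ge0 ->]]].
pose s := map_mx sqrtC d.
have s_ge0 j : 0 <= s 0 j by rewrite mxE sqrtC_ge0.
exists (adjmx P *m diag_mx s *m P); split; first exact: psdmx_conj_diag.
rewrite !mulmxA mulmxtVK // -(mulmxA (adjmx P)) mulmx_diag.
congr (_ *m diag_mx _ *m _).
by apply/matrixP => i j; rewrite ord1 !mxE -expr2 sqrtCK.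
Qed.

Lemma msqrtP n (M : 'M[K]_n) :
  psdmx M -> psdmx (msqrt M) /\ msqrt M *m msqrt M = M.
Proof.
move=> /psdmx_sqrt.
exact: (epsilon_spec (inhabits 0) (fun X => psdmx X /\ X *m X = M)).
Qed.

Lemma psdmx_qform_eq0 n (M : 'M[K]_n) (x : 'cV[K]_n) :
  psdmx M -> qform M x = 0 -> M *m x = 0.
Proof.
move=> /psdmx_sqrt [S [[S_herm _] <-]] Sx2_eq0.
suff Sx0 : S *m x = 0 by rewrite -mulmxA Sx0 mulmx0.
by apply: adjmx_mulmx_eq0; rewrite adjmxM S_herm -Sx2_eq0 !mulmxA.
Qed.

Lemma msqrt_mulmx_adj_eq0 m n (B : 'M[K]_(m, n)) (x : 'cV[K]_m) :
  (msqrt (B *m adjmx B) *m x == 0) = (adjmx B *m x == 0).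
Proof.
have [[S_herm _] SS] := msqrtP (psdmx_mulmx_adj B).
set S := msqrt _ in S_herm SS *.
by rewrite -[in LHS]S_herm -(mulmx_adj_eq0 S) S_herm SS mulmx_adj_eq0.
Qed.

Lemma pdmx_addP n (A S : 'M[K]_n) : psdmx A -> psdmx S ->
  pdmx (A + S) <-> (forall x : 'cV[K]_n, A *m x = 0 -> S *m x = 0 -> x = 0).
Proof.
move=> A_psd S_psd; split=> [[_ AS_gt0] x Ax0 Sx0|ker0].
  apply/eqP; apply: contraT => /AS_gt0.
  by rewrite -mulmxA mulmxDl Ax0 Sx0 addr0 mulmx0 mxE ltxx.
split=> [|x x_neq0]; first by rewrite /Defs.hermitian adjmxD A_psd.1 S_psd.1.
rewrite mulmxDr mulmxDl mxE lt_def addr_ge0 ?A_psd.2 ?S_psd.2 // andbT.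
rewrite paddr_eq0 ?A_psd.2 ?S_psd.2 //.
apply: contra x_neq0 => /andP[/eqP qA0 /eqP qS0].
by rewrite (ker0 x (psdmx_qform_eq0 A_psd qA0) (psdmx_qform_eq0 S_psd qS0)).
Qed.

Lemma pdmx_add_msqrtP m n (A : 'M[K]_m) (B : 'M[K]_(m, n)) : psdmx A ->
  pdmx (A + msqrt (B *m adjmx B)) <->
  (forall x : 'cV[K]_m, A *m x = 0 -> adjmx B *m x = 0 -> x = 0).
Proof.
move=> A_psd; rewrite pdmx_addP //; last exact: (msqrtP (psdmx_mulmx_adj B)).1.
split=> ker0 x Ax0 /eqP Bx0; apply: ker0 => //; apply/eqP.
  by rewrite msqrt_mulmx_adj_eq0.
by rewrite -msqrt_mulmx_adj_eq0.
Qed.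

Lemma hermitian_block_kerP p q (A : 'M[K]_p) (C : 'M[K]_q) (B : 'M[K]_(p, q))
    (x : 'cV[K]_p) (y : 'cV[K]_q) : psdmx A -> psdmx C ->
  block_mx A B (adjmx B) (- C) *m col_mx x y = 0 <->
  [/\ A *m x = 0, adjmx B *m x = 0, C *m y = 0 & B *m y = 0].
Proof.
move=> A_psd C_psd; rewrite mul_block_col -col_mx0 mulNmx.
split=> [/eq_col_mx [Axy0 Bxy0]|[-> -> -> ->]]; last by rewrite oppr0 !addr0.
have xBy : adjmx x *m B *m y = - (adjmx x *m A *m x).
  by apply/eqP; rewrite -addr_eq0 addrC -!mulmxA -mulmxDr Axy0 mulmx0.
have yCy : adjmx y *m C *m y = - (adjmx x *m A *m x).
  have := congr1 (mulmx (adjmx y)) Bxy0.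
  rewrite mulmxDr mulmxN mulmx0 !mulmxA => /subr0_eq <-.
  rewrite (_ : _ *m _ *m x = adjmx (adjmx x *m B *m y)).
    by rewrite xBy adjmxN !adjmxM adjmxK A_psd.1 mulmxA.
  by rewrite !adjmxM adjmxK mulmxA.
have qCA : qform C y = - qform A x by rewrite yCy mxE.
have qA0 : qform A x = 0.
  by apply/le_anti; rewrite A_psd.2 andbT -oppr_ge0 -qCA C_psd.2.
have Ax0 := psdmx_qform_eq0 A_psd qA0.
have Cy0 : C *m y = 0 by apply: psdmx_qform_eq0; rewrite // qCA qA0 oppr0.
by move: Axy0 Bxy0; rewrite Ax0 Cy0 add0r oppr0 addr0.
Qed.

End PsdMatrices.

Local Open Scope complex_scope.

Theorem corollary2p2 (R : realType) (p q : nat)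
  (A : 'M[R[i]]_p) (C : 'M[R[i]]_q) (B : 'M[R[i]]_(p, q)) :
  psdmx A -> psdmx C ->
  let H : 'M[R[i]]_(p + q) := block_mx A B (adjmx B) (- C) in
  H \in unitmx <->
  (pdmx (A + msqrt (B *m adjmx B)) /\ pdmx (C + msqrt (adjmx B *m B))).
Proof.
move=> A_psd C_psd H.
rewrite unitmx_kerP (pdmx_add_msqrtP B A_psd).
have := pdmx_add_msqrtP (adjmx B) C_psd; rewrite adjmxK => ->.
split=> [ker0|[kerAB kerCB] v].
  split=> [x Ax0 Bx0 | y Cy0 By0].
  - have /eqP : col_mx x 0 = 0 :> 'cV_(p + q).
      by apply/ker0/hermitian_block_kerP; rewrite ?mulmx0.
    by rewrite col_mx_eq0 => /andP[/eqP].
  - have /eqP : col_mx 0 y = 0 :> 'cV_(p + q).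
      by apply/ker0/hermitian_block_kerP; rewrite ?mulmx0.
    by rewrite col_mx_eq0 => /andP[_ /eqP].
rewrite -[v]vsubmxK => /hermitian_block_kerP [//|//|Ax0 Bx0 Cy0 By0].
by rewrite (kerAB _ Ax0 Bx0) (kerCB _ Cy0 By0) col_mx0.
Qed.
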